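(* $\mathfrak{L}(\mathrm{rtDBVA}(1))=\mathfrak{L}(\mathrm{1DFAMW})$.
   Context: $\mathfrak{L}(A)$ denotes the class of languages recognized by machines of type $A$. A real-time deterministic blind vector automaton of dimension $k$ ($\mathrm{rtDBVA}(k)$) is a 6-tuple $(Q,\Sigma,\delta,q_0,Q_a,v)$ with finite state set $Q$, initial state $q_0$, accept states $Q_a$, initial row vector $v\in\mathbb{Q}^k$ (freely chosen), and $\delta:Q\times(\Sigma\cup\{\cent,\$\})\to Q\times S$, $S$ the set of $k\times k$ rational matrices; the input $w$ is read as $\cent w\$$ left to right, one symbol per step, and $\delta(q,\sigma)=(q',M)$ means that in state $q$ reading $\sigma$ the machine goes to $q'$ and multiplies its row vector on the right by $M$. The input is accepted iff after processing $\$$ the state is in $Q_a$ and the first vector entry equals $1$. A one-way deterministic finite automaton with multiplication without equality (1DFAMW) is a 6-tuple $(Q,\Sigma,\delta,q_0,Q_a,\Gamma)$ with $\Gamma$ a finite set of rationals and a rational register initially $1$; the tape holds $\cent w\$$; $\delta:Q\times(\Sigma\cup\{\cent,\$\})\to Q\times\{\downarrow,\rightarrow\}\times\Gamma$, and $\delta(q,\sigma)=(q',d,\gamma)$ means that in state $q$ reading $\sigma$ it goes to $q'$, keeps the head in place ($\downarrow$) or moves it one cell right ($\rightarrow$), and multiplies the register by $\gamma$. The input is accepted iff the machine enters an accept state with register value $1$ after scanning $\$$. *)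

From mathcomp Require Import all_boot all_order all_algebra.
Set Implicit Arguments. Unset Strict Implicit. Unset Printing Implicit Defensive.
Import GRing.Theory Num.Theory.
Local Open Scope ring_scope.

Inductive tsym (Sigma : Type) := Cent | Dollar | Sym of Sigma.
Arguments Cent {Sigma}. Arguments Dollar {Sigma}.

Definition tape (Sigma : Type) (w : seq Sigma) : seq (tsym Sigma) :=
  Cent :: rcons (map (@Sym Sigma) w) Dollar.

Record rtDBVA (Sigma : Type) (Q : finType) (k : nat) := RtDBVA {
  bva_delta : Q -> tsym Sigma -> Q * 'M[rat]_k;
  bva_q0 : Q;
  bva_acc : {set Q};
  bva_v : 'rV[rat]_k }.

Definition bva_step Sigma Q k (M : rtDBVA Sigma Q k)
  (c : Q * 'rV[rat]_k) (s : tsym Sigma) : Q * 'rV[rat]_k :=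
  let: (q, v) := c in let: (q', A) := bva_delta M q s in (q', v *m A).

Definition bva_run Sigma Q k (M : rtDBVA Sigma Q k) (w : seq Sigma) :=
  foldl (bva_step M) (bva_q0 M, bva_v M) (tape w).

Definition bva_accepts Sigma Q k (M : rtDBVA Sigma Q k) (w : seq Sigma) : Prop :=
  let: (q, v) := bva_run M w in
  q \in bva_acc M /\ exists i : 'I_k, nat_of_ord i = 0%N /\ v ord0 i = 1.

(* the bool component of a transition is the head move: false = stay, true = move right *)
Record DFAMW (Sigma : Type) (Q : finType) := Dfamw {
  fam_delta : Q -> tsym Sigma -> Q * bool * rat;
  fam_q0 : Q;
  fam_acc : {set Q};
  fam_gamma : seq rat;
  fam_gammaP : forall q s, (fam_delta q s).2 \in fam_gamma }.

(* configurations: (state, head position on the tape, register) *)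
Definition fam_step Sigma Q (M : DFAMW Sigma Q) (t : seq (tsym Sigma))
  (c : Q * nat * rat) : Q * nat * rat :=
  let: (q, p, r) := c in
  if (p < size t)%N then
    let: (q', d, g) := fam_delta M q (nth Cent t p) in (q', (p + d)%N, r * g)
  else c. (* head has moved past $: computation has halted *)

Definition fam_accepts Sigma Q (M : DFAMW Sigma Q) (w : seq Sigma) : Prop :=
  exists n : nat,
    let: (q, p, r) := iter n (fam_step M (tape w)) (fam_q0 M, 0%N, 1) in
    [/\ p = size (tape w), q \in fam_acc M & r = 1].

Definition in_L_rtDBVA (k : nat) (Sigma : finType) (L : seq Sigma -> Prop) : Prop :=
  exists (Q : finType) (M : rtDBVA Sigma Q k), forall w, L w <-> bva_accepts M w.

Definition in_L_1DFAMW (Sigma : finType) (L : seq Sigma -> Prop) : Prop :=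
  exists (Q : finType) (M : DFAMW Sigma Q), forall w, L w <-> fam_accepts M w.

From mathcomp Require Import all_boot all_order all_algebra.
From Stdlib Require Import ClassicalEpsilon.
Set Implicit Arguments. Unset Strict Implicit. Unset Printing Implicit Defensive.
Import GRing.Theory.
Local Open Scope ring_scope.

(* A one-dimensional vector is a single rational register, so an rtDBVA(1) is
   a 1DFAMW whose head always moves right; the initial vector entry is folded
   into the multiplier used on the left endmarker.  Conversely, the stationary
   moves of a 1DFAMW on a fixed symbol form a deterministic computation that
   either eventually moves right, in a determined state and with a determined
   product of multipliers, or loops forever and rejects.  A real-time machine
   performs that whole block of moves in one step, entering a rejecting sink
   when the block never ends. *)

Lemma drop_eq_cons (T : Type) (x0 : T) (t s : seq T) p a :
  drop p t = a :: s -> [/\ (p < size t)%N, nth x0 t p = a & drop p.+1 t = s].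
Proof.
move=> t_p; have lt_p : (p < size t)%N by rewrite -subn_gt0 -size_drop t_p.
by move: t_p; rewrite (drop_nth x0 lt_p) => -[-> ->].
Qed.

Definition reg_step (S Q : Type) (f : Q -> S -> Q * rat) (c : Q * rat) (s : S) :=
  ((f c.1 s).1, c.2 * (f c.1 s).2).

Lemma eq_foldl_reg_step (S Q : Type) (f g : Q -> S -> Q * rat) :
  f =2 g -> foldl (reg_step f) =2 foldl (reg_step g).
Proof. by move=> fg c s; elim: s c => //= a s IH c; rewrite /reg_step fg IH. Qed.

Section OneDimensionalBVA.
Variables (Sigma : Type) (Q : finType) (M : rtDBVA Sigma Q 1).

Definition bva_scalar q s : Q * rat := ((bva_delta M q s).1, (bva_delta M q s).2 0 0).

Lemma foldl_bva_step1 s q x :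
  foldl (bva_step M) (q, x%:M) s =
  let: (q', y) := foldl (reg_step bva_scalar) (q, x) s in (q', y%:M).
Proof.
elim: s q x => [|a s IH] q x //=.
rewrite /reg_step /bva_scalar /=; case: (bva_delta M q a) => q' A /=.
by rewrite {1}(mx11_scalar A) -scalar_mxM IH.
Qed.

Lemma bva_accepts1 w :
  bva_accepts M w <->
  let: (q, x) := foldl (reg_step bva_scalar) (bva_q0 M, bva_v M 0 0) (tape w) in
  q \in bva_acc M /\ x = 1.
Proof.
rewrite /bva_accepts /bva_run {1}(mx11_scalar (bva_v M)) foldl_bva_step1.
case: foldl => q x; split=> [[q_acc [i [_]]] | [q_acc x1]].
  by rewrite (ord1 i) mxE mulr1n.
by split=> //; exists ord0; rewrite mxE mulr1n.
Qed.

End OneDimensionalBVA.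

Section DFAMWRuns.
Variables (Sigma : Type) (Q : finType) (M : DFAMW Sigma Q) (t : seq (tsym Sigma)).

Definition fam_reg q s : Q * rat := ((fam_delta M q s).1.1, (fam_delta M q s).2).

Lemma iter_fam_step_halted c n : (size t <= c.1.2)%N -> iter n (fam_step M t) c = c.
Proof.
move=> halted; elim: n => //= n ->.
by case: c halted => [[q p] r] /= halted; rewrite /fam_step ltnNge halted.
Qed.

Lemma fam_step_head_mono c : (c.1.2 <= (fam_step M t c).1.2)%N.
Proof.
case: c => [[q p] r] /=; rewrite /fam_step; case: ifP => // _.
by case: (fam_delta M q _) => [[q' d] g]; rewrite leq_addr.
Qed.

Lemma iter_fam_step_head_mono c m m' : (m <= m')%N ->
  ((iter m (fam_step M t) c).1.2 <= (iter m' (fam_step M t) c).1.2)%N.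
Proof.
move=> /subnK <-; elim: (m' - m)%N => // j IH.
by rewrite addSn iterS; apply: leq_trans IH (fam_step_head_mono _).
Qed.

Lemma iter_fam_step_halted_unique c m m' q q' r r' :
  iter m (fam_step M t) c = (q, size t, r) ->
  iter m' (fam_step M t) c = (q', size t, r') -> q = q' /\ r = r'.
Proof.
move=> run_m run_m'; suff: iter m (fam_step M t) c = iter m' (fam_step M t) c.
  by rewrite run_m run_m' => -[-> ->].
wlog le_mm' : m m' q q' r r' run_m run_m' / (m <= m')%N.
  move=> W; case: (leqP m m') => [|/ltnW] le; first exact: W run_m run_m' le.
  by symmetry; apply: W run_m' run_m le.
by rewrite -(subnK le_mm') iterD [RHS]iter_fam_step_halted // run_m.
Qed.

Hypothesis moves_right : forall q s, (fam_delta M q s).1.2.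

Lemma iter_fam_step_right s p q r : drop p t = s ->
  iter (size s) (fam_step M t) (q, p, r) =
  let: (q', x) := foldl (reg_step fam_reg) (q, r) s in (q', (p + size s)%N, x).
Proof.
elim: s p q r => [|a s IH] p q r; first by rewrite addn0.
case/(drop_eq_cons Cent) => lt_p t_p t_p1.
rewrite [size _]/= iterSr /= -addSnnS -IH //.
rewrite /fam_step lt_p t_p /reg_step /fam_reg.
by case: (fam_delta M q a) (moves_right q a) => [[q' d] g] /= ->; rewrite addn1.
Qed.

End DFAMWRuns.

Lemma fam_accepts_right (Sigma : Type) (Q : finType) (M : DFAMW Sigma Q) w :
  (forall q s, (fam_delta M q s).1.2) ->
  fam_accepts M w <->
  let: (q, x) := foldl (reg_step (fam_reg M)) (fam_q0 M, 1) (tape w) in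
  q \in fam_acc M /\ x = 1.
Proof.
move=> right; have run := iter_fam_step_right right (fam_q0 M) 1 (drop0 (tape w)).
rewrite /fam_accepts; move: run; rewrite add0n; case: foldl => q x run; split.
  case=> n; case En: (iter _ _ _) => [[q' p] r] [p_end q'_acc r1]; subst p.
  by have [<- <-] := iter_fam_step_halted_unique En run.
by case=> q_acc x1; exists (size (tape w)); rewrite run.
Qed.

Section DFAMWofRtDBVA.
Variables (Sigma Q : finType) (M : rtDBVA Sigma Q 1).

Definition rt_mult q (s : tsym Sigma) : rat :=
  (bva_delta M q s).2 0 0 * (if s is Cent then bva_v M 0 0 else 1).

Definition rt_delta q s := ((bva_delta M q s).1, true, rt_mult q s).

Definition rt_gamma : seq rat :=
  flatten [seq [:: rt_mult q Cent, rt_mult q Dollar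
                 & [seq rt_mult q (Sym a) | a <- enum Sigma]] | q <- enum Q].

Lemma rt_gammaP q s : (rt_delta q s).2 \in rt_gamma.
Proof.
apply/flattenP; exists [:: rt_mult q Cent, rt_mult q Dollar
                        & [seq rt_mult q (Sym a) | a <- enum Sigma]].
  exact: (map_f _ (mem_enum _ q)).
by case: s => [||a]; rewrite !inE ?eqxx ?orbT // (map_f _ (mem_enum _ a)) !orbT.
Qed.

Definition dfamw_of_rtDBVA :=
  @Dfamw Sigma Q rt_delta (bva_q0 M) (bva_acc M) rt_gamma rt_gammaP.

Lemma dfamw_of_rtDBVA_accepts w :
  fam_accepts dfamw_of_rtDBVA w <-> bva_accepts M w.
Proof.
rewrite fam_accepts_right // bva_accepts1.
have reg_Cent : reg_step (fam_reg dfamw_of_rtDBVA) (bva_q0 M, 1) Cent =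
                reg_step (bva_scalar M) (bva_q0 M, bva_v M 0 0) Cent.
  by rewrite /reg_step /fam_reg /bva_scalar /= /rt_mult mul1r mulrC.
have reg_other c s : s <> Cent ->
    reg_step (fam_reg dfamw_of_rtDBVA) c s = reg_step (bva_scalar M) c s.
  case: s => [/(_ erefl) []|_|a _];
  by rewrite /reg_step /fam_reg /bva_scalar /= /rt_mult mulr1.
suff -> : foldl (reg_step (fam_reg dfamw_of_rtDBVA)) (bva_q0 M, 1) (tape w) =
          foldl (reg_step (bva_scalar M)) (bva_q0 M, bva_v M 0 0) (tape w) by [].
rewrite /= reg_Cent; elim: w (reg_step _ _ _) => [|a w IH] c /=.
  by rewrite reg_other.
by rewrite reg_other // IH.
Qed.

End DFAMWofRtDBVA.

Section RtDBVAofDFAMW.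
Variables (Sigma Q : finType) (M : DFAMW Sigma Q).

(* Describes the run of [M] on [s] only up to the first [moves_at]. *)
Definition stay q s i : Q * rat := iter i (reg_step (fam_reg M) ^~ s) (q, 1).

Definition moves_at q s i : bool := (fam_delta M (stay q s i).1 s).1.2.

Definition leave q s : option (Q * rat) :=
  match excluded_middle_informative (exists i, moves_at q s i) with
  | left ex_move => Some (reg_step (fam_reg M) (stay q s (ex_minn ex_move)) s)
  | right _ => None
  end.

Section FixedSymbol.
Variables (t : seq (tsym Sigma)) (p : nat) (s : tsym Sigma).
Hypotheses (lt_p : (p < size t)%N) (t_p : nth Cent t p = s).

Lemma iter_fam_step_stay q r j : (forall l, (l < j)%N -> ~~ moves_at q s l) ->
  iter j (fam_step M t) (q, p, r) = ((stay q s j).1, p, r * (stay q s j).2).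
Proof.
elim: j => [|j IH] no_move; first by rewrite mulr1.
rewrite iterS IH => [|l /ltnW]; last exact: no_move.
have := no_move j (ltnSn j); rewrite /moves_at /fam_step lt_p t_p /stay iterS.
rewrite /reg_step /fam_reg; case: (fam_delta M _ s) => [[q' d] g] /= /negbTE ->.
by rewrite addn0 mulrA.
Qed.

Lemma leave_some q r q' g : leave q s = Some (q', g) ->
  exists m, iter m (fam_step M t) (q, p, r) = (q', p.+1, r * g).
Proof.
rewrite /leave; case: excluded_middle_informative => // ex_move.
case: ex_minnP => i move_i min_i [<- <-]; exists i.+1.
rewrite iterS iter_fam_step_stay => [|l lt_li]; last first.
  by apply/negP => /min_i; rewrite leqNgt lt_li.
move: move_i; rewrite /moves_at /fam_step lt_p t_p /reg_step /fam_reg.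
by case: (fam_delta M _ s) => [[q'' d] g'] /= ->; rewrite addn1 mulrA.
Qed.

Lemma leave_none q r : leave q s = None ->
  forall j, (iter j (fam_step M t) (q, p, r)).1.2 = p.
Proof.
rewrite /leave; case: excluded_middle_informative => // no_move _ j.
by rewrite iter_fam_step_stay // => l _; apply/negP => move_l; apply: no_move; exists l.
Qed.

End FixedSymbol.

(* [None] is a rejecting sink, entered when the stationary computation never ends. *)
Definition leave_opt (o : option Q) s : option Q * rat :=
  if o is Some q then
    if leave q s is Some (q', g) then (Some q', g) else (None, 1)
  else (None, 1).

Definition rtDBVA_of_dfamw :=
  @RtDBVA Sigma (option Q) 1 (fun o s => ((leave_opt o s).1, (leave_opt o s).2%:M))
    (Some (fam_q0 M)) [set o | if o is Some q then q \in fam_acc M else false] 1%:M.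

Lemma bva_scalar_rtDBVA_of_dfamw : bva_scalar rtDBVA_of_dfamw =2 leave_opt.
Proof. by move=> o s; rewrite /bva_scalar /= mxE mulr1n; case: leave_opt. Qed.

(* A sink configuration means that [M] never runs off the tape. *)
Definition simulates t p (c : option Q * rat) : Prop :=
  let run m := iter m (fam_step M t) (fam_q0 M, 0%N, 1 : rat) in
  if c.1 is Some q then exists m, run m = (q, p, c.2)
  else forall m, ((run m).1.2 < size t)%N.

Lemma simulates_foldl t s p c : drop p t = s -> simulates t p c ->
  simulates t (p + size s) (foldl (reg_step leave_opt) c s).
Proof.
elim: s p c => [|a s IH] p [o x]; first by rewrite addn0.
case/(drop_eq_cons Cent) => lt_p t_p t_p1 sim.
rewrite /= -addSnnS; apply: IH => //.
case: o sim => [q [m run_m]|//]; rewrite /reg_step /=.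
case leave_q: (leave q a) => [[q' g]|] /=.
  have [m1 run_m1] := leave_some lt_p t_p x leave_q.
  by exists (m1 + m)%N; rewrite iterD run_m.
move=> m'; case: (leqP m' m) => le_m'.
  by apply: leq_ltn_trans (iter_fam_step_head_mono _ _ _ le_m') _; rewrite run_m.
by rewrite -(subnK (ltnW le_m')) iterD run_m (leave_none lt_p t_p x leave_q).
Qed.

Lemma rtDBVA_of_dfamw_accepts w : bva_accepts rtDBVA_of_dfamw w <-> fam_accepts M w.
Proof.
rewrite bva_accepts1 (eq_foldl_reg_step bva_scalar_rtDBVA_of_dfamw).
have sim0 : simulates (tape w) 0 (Some (fam_q0 M), (1%:M : 'M[rat]_1) 0 0).
  by exists 0%N; rewrite mxE.
have := simulates_foldl (drop0 _) sim0; rewrite add0n /fam_accepts.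
case: foldl => [[q|] x] sim; rewrite inE; last first.
  split=> [[]//|[n]]; case En: (iter _ _ _) => [[q' p] r] [p_end _ _].
  by have := sim n; rewrite En p_end ltnn.
case: sim => m /= run_m; split=> [[q_acc x1] | [n]].
  by exists m; rewrite run_m x1.
case En: (iter _ _ _) => [[q' p] r] [p_end q'_acc r1]; subst p.
by have [<- <-] := iter_fam_step_halted_unique En run_m.
Qed.

End RtDBVAofDFAMW.

Theorem theorem9 (Sigma : finType) (L : seq Sigma -> Prop) :
  in_L_rtDBVA 1 L <-> in_L_1DFAMW L.
Proof.
split=> [[Q [M accM]] | [Q [M accM]]].
  exists Q, (dfamw_of_rtDBVA M) => w.
  by rewrite accM dfamw_of_rtDBVA_accepts.
exists (option Q), (rtDBVA_of_dfamw M) => w.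
by rewrite accM rtDBVA_of_dfamw_accepts.
Qed.
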